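(* Let $(C,d)$ be a finitely generated chain complex with two filtrations given by filtration degree functions $p$ and $p'$ such that for every $x\in C$ the difference $p'(x)-p(x)$ is either $0$ or $1$. If the $p'$-spectral sequence collapses on page $l$, then the $p$-spectral sequence collapses on page $l+1$; i.e. the $p$-spectral sequence collapses at most one page after the $p'$-spectral sequence does.
   Context: A filtration on $C$ is a function $p:C\to\mathbb{Z}\cup\{-\infty\}$ with $p(x-y)\le\max(p(x),p(y))$ and $p(dx)\le p(x)$; write $C^k=\{x:p(x)\le k\}$. Define $Z^k_r=\{x\in C^k: dx\in C^{k-r}\}$, $B^k_r=\{dy\in C^k: y\in C^{k+r}\}$, and the pages $E^k_r=Z^k_r/(Z^{k-1}_{r-1}+B^k_{r-1})$ with differential $d_r[x]=[dx]:E^k_r\to E^{k-r}_r$. The spectral sequence collapses on page $l$ if $d_r=0$ for all $r\ge l$. *)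

From HB Require Import structures.
From mathcomp Require Import all_boot all_order all_algebra.
Set Implicit Arguments. Unset Strict Implicit. Unset Printing Implicit Defensive.
Import Order.TTheory GRing.Theory Num.Theory.
Local Open Scope ring_scope.

(* Z ∪ {-oo} is represented by [option int], with [None] = -oo. *)
Definition zle (a b : option int) : bool :=
  match a, b with
  | None, _ => true
  | Some _, None => false
  | Some x, Some y => x <= y
  end.

Definition zmax (a b : option int) : option int :=
  match a, b with
  | None, _ => b
  | _, None => a
  | Some x, Some y => Some (Num.max x y)
  end.

Definition zsucc (a : option int) : option int := omap (fun n => n + 1) a.

Section Filtered.
Variables (R : nzRingType) (C : lmodType R) (d : {linear C -> C}).

Definition finitely_generated : Prop :=
  exists s : seq C, forall x : C,
    exists c : 'I_(size s) -> R, x = \sum_(i < size s) c i *: s`_i.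

Definition is_complex : Prop := forall x : C, d (d x) = 0.

Definition is_filtration (p : C -> option int) : Prop :=
  (forall x y, zle (p (x - y)) (zmax (p x) (p y))) /\
  (forall x, zle (p (d x)) (p x)).

Definition Cfil (p : C -> option int) (k : int) (x : C) : Prop :=
  zle (p x) (Some k).

Definition Zfil (p : C -> option int) (k r : int) (x : C) : Prop :=
  Cfil p k x /\ Cfil p (k - r) (d x).

Definition Bfil (p : C -> option int) (k r : int) (z : C) : Prop :=
  exists y, z = d y /\ Cfil p k z /\ Cfil p (k + r) y.

(* The differential d_r : E^k_r -> E^{k-r}_r, E^k_r = Z^k_r/(Z^{k-1}_{r-1}+B^k_{r-1}),
   vanishes: for every x in Z^k_r, the class of dx in E^{k-r}_r is zero, i.e.
   dx lies in Z^{k-r-1}_{r-1} + B^{k-r}_{r-1}. *)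
Definition dr_zero (p : C -> option int) (r : nat) : Prop :=
  forall (k : int) (x : C), Zfil p k r%:Z x ->
    exists a b, Zfil p (k - r%:Z - 1) (r%:Z - 1) a /\
                Bfil p (k - r%:Z) (r%:Z - 1) b /\ d x = a + b.

Definition collapses_on (p : C -> option int) (l : nat) : Prop :=
  forall r : nat, (l <= r)%N -> dr_zero p r.

End Filtered.

From HB Require Import structures.
From mathcomp Require Import all_boot all_order all_algebra.
From mathcomp Require Import zify.
Import GRing.Theory.
Local Open Scope ring_scope.
Import Order.TTheory.
Set Implicit Arguments. Unset Strict Implicit. Unset Printing Implicit Defensive.

(* On a page r where the p'-sequence has collapsed, every x in the p'-group
   Z^K_r has d x = a + d y with p'(a) <= K - r - 1 and p'(y) <= K - 1;
   applying this to x and then to x - y, two consecutive collapsed pages r and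
   r + 1 even give p'(a) <= K - r - 2.  Now let x be in the p-group Z^k_r with
   r >= l + 1.  As p <= p' <= p + 1, x lies in the p'-group Z^{k+1}_r, and
   pages r, r + 1 give d x = a1 + d z with p(a1) <= k - r - 1, p'(z) <= k.
   Then p(d z) <= k - r, so z lies in the p'-group Z^k_{r-1}, and pages r - 1,
   r give d z = a2 + d y with p(a2) <= k - r - 1, p(y) <= k - 1.  Hence
   a1 + a2 = d x - d y is a cycle (of degree -oo, since collapse forces
   p(0) = -oo) and [d x] = [d y] = 0 in E^{k-r}_r.  Page r - 1 is what costs
   the extra page. *)

Lemma zle_trans a b c : zle a b -> zle b c -> zle a c.
Proof. by case: a => [a|] //; case: b => [b|] //; case: c => [c|] //; exact: le_trans. Qed.

Lemma zle_max a b c : zle a c -> zle b c -> zle (zmax a b) c.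
Proof.
by case: a => [a|] //; case: b => [b|] //; case: c => [c|] //= ac bc; rewrite ge_max ac bc.
Qed.

Lemma zmaxxx a : zmax a a = a.
Proof. by case: a => [a|] //=; rewrite maxxx. Qed.

Section Filtration.
Variables (R : nzRingType) (C : lmodType R) (p : C -> option int).
Hypothesis p_sub : forall x y, zle (p (x - y)) (zmax (p x) (p y)).

Lemma Cfil_le i j x : i <= j -> Cfil p i x -> Cfil p j x.
Proof. by rewrite /Cfil; case: (p x) => [n|] //= ij ni; exact: le_trans ni ij. Qed.

Lemma filtration0_le x : zle (p 0) (p x).
Proof. by have := p_sub x x; rewrite subrr zmaxxx. Qed.

Lemma Cfil_sub j x y : Cfil p j x -> Cfil p j y -> Cfil p j (x - y).
Proof. by move=> px py; exact: zle_trans (p_sub x y) (zle_max px py). Qed.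

Lemma Cfil_add j x y : Cfil p j x -> Cfil p j y -> Cfil p j (x + y).
Proof.
move=> px py; rewrite -[y]opprK; apply: Cfil_sub => //.
have := p_sub 0 y; rewrite add0r => pNy.
exact: zle_trans pNy (zle_max (zle_trans (filtration0_le y) py) py).
Qed.

End Filtration.

Section Pages.
Variables (R : nzRingType) (C : lmodType R) (d : {linear C -> C}).
Variable p : C -> option int.
Hypothesis p_sub : forall x y, zle (p (x - y)) (zmax (p x) (p y)).

Lemma dr_zero_filtration0 r : dr_zero d p r -> p 0 = None.
Proof.
move=> dr0; case E: (p 0) => [m|] //.
have [|a [b [[pa _] _]]] := dr0 (m + r%:Z) 0.
  by rewrite /Zfil /Cfil linear0 E /=; split; lia.
have := filtration0_le p_sub a; move: pa; rewrite /Cfil E.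
by case: (p a) => [n|] //=; lia.
Qed.

Lemma dr_zero_decomp r K z : dr_zero d p r ->
  Cfil p K z -> Cfil p (K - r%:Z) (d z) ->
  exists a y, [/\ Cfil p (K - r%:Z - 1) a, Cfil p (K - 1) y & d z = a + d y].
Proof.
move=> dr0 pz pdz.
have [a [_ [[pa _] [[y [-> [_ py]]] dz]]]] := dr0 K z (conj pz pdz).
by exists a, y; split=> //; apply: Cfil_le py; lia.
Qed.

Lemma dr_zero2_decomp r K z : dr_zero d p r -> dr_zero d p r.+1 ->
  Cfil p K z -> Cfil p (K - r%:Z) (d z) ->
  exists a y, [/\ Cfil p (K - r%:Z - 2) a, Cfil p (K - 1) y & d z = a + d y].
Proof.
move=> dr0 dr1 pz pdz.
have [a1 [y1 [pa1 py1 dz]]] := dr_zero_decomp dr0 pz pdz.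
have dzy1 : d (z - y1) = a1 by rewrite linearB dz addrK.
have pzy1 : Cfil p K (z - y1).
  by apply: Cfil_sub => //; apply: Cfil_le py1; lia.
have [|a2 [y2 [pa2 py2 dzy1']]] := dr_zero_decomp dr1 pzy1.
  by rewrite dzy1; apply: Cfil_le pa1; lia.
exists a2, (y1 + y2); split.
- by apply: Cfil_le pa2; lia.
- exact: Cfil_add.
- by rewrite dz -dzy1 dzy1' linearD -addrA [d y2 + _]addrC.
Qed.

Hypothesis d_complex : is_complex d.

Lemma dr_zero_of_decomp r : p 0 = None ->
  (forall k x, Zfil d p k r%:Z x ->
     exists a y, [/\ Cfil p (k - r%:Z - 1) a, Cfil p (k - 1) y & d x = a + d y]) ->
  dr_zero d p r.
Proof.
move=> p0 decomp k x [px pdx].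
have [a [y [pa py dx]]] := decomp k x (conj px pdx).
have dy : d y = d x - a by rewrite dx addrC addKr.
exists a, (d y); split; last split=> //.
- split=> //; have -> : a = d x - d y by rewrite dx addrK.
  by rewrite /Cfil linearB !d_complex subr0 p0.
- exists y; split=> //; split; last by apply: Cfil_le py; lia.
  by rewrite dy; apply: Cfil_sub => //; apply: Cfil_le pa; lia.
Qed.

End Pages.

Section Shift.
Variables (R : nzRingType) (C : lmodType R) (p p' : C -> option int).
Hypothesis p'_shift : forall x : C, p' x = p x \/ p' x = zsucc (p x).

Lemma Cfil_unshift j x : Cfil p' j x -> Cfil p j x.
Proof.
rewrite /Cfil; case: (p'_shift x) => -> //.
by case: (p x) => [n|] //=; lia.
Qed.

Lemma Cfil_shift j x : Cfil p j x -> Cfil p' (j + 1) x.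
Proof. by rewrite /Cfil; case: (p'_shift x) => ->; case: (p x) => [n|] //=; lia. Qed.

End Shift.

Theorem proposition4p1 (R : nzRingType) (C : lmodType R) (d : {linear C -> C})
  (p p' : C -> option int) (l : nat) :
  finitely_generated C -> is_complex d ->
  is_filtration d p -> is_filtration d p' ->
  (forall x : C, p' x = p x \/ p' x = zsucc (p x)) ->
  collapses_on d p' l -> collapses_on d p l.+1.
Proof.
move=> _ d_complex [p_sub _] [p'_sub _] p'_shift collapse [|s] // ls.
have dr_s := collapse s ls.
have dr_s1 := collapse s.+1 (leqW ls).
have dr_s2 := collapse s.+2 (leqW (leqW ls)).
have p0 : p 0 = None.
  have p'0 := dr_zero_filtration0 p'_sub dr_s.
  by case: (p'_shift 0); rewrite p'0 //; case: (p 0).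
apply: dr_zero_of_decomp => // k x [px pdx].
have [|a1 [z [pa1 pz dx]]] :=
  dr_zero2_decomp p'_sub dr_s1 dr_s2 (Cfil_shift p'_shift px).
  by apply: Cfil_le (Cfil_shift p'_shift pdx); lia.
have {}pz : Cfil p' k z by apply: Cfil_le pz; lia.
have pdz : Cfil p (k - s.+1%:Z) (d z).
  have -> : d z = d x - a1 by rewrite dx addrC addKr.
  by apply: Cfil_sub => //; apply: Cfil_le (Cfil_unshift p'_shift pa1); lia.
have [|a2 [y [pa2 py dz]]] := dr_zero2_decomp p'_sub dr_s dr_s1 pz.
  by apply: Cfil_le (Cfil_shift p'_shift pdz); lia.
exists (a1 + a2), y; split.
- apply: (Cfil_add p_sub); apply: (Cfil_unshift p'_shift).
    by apply: Cfil_le pa1; lia.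
  by apply: Cfil_le pa2; lia.
- by apply: (Cfil_unshift p'_shift); apply: Cfil_le py; lia.
- by rewrite dx dz addrA.
Qed.
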